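(* Let $n\ge 2$, $\beta\in\partial\mathbb{D}$, $\{\alpha_j\}_{j=0}^{n-2}\in\mathbb{D}^{n-1}$. Write $P_n(z)=P_n(z;\{\alpha_j\}_{j=0}^{n-2},\beta)$, $Q_n(z)=Q_n(z;\{\alpha_j\}_{j=0}^{n-2},\beta)$, and $P_{n-1}(z)=P_{n-1}(z;\{\alpha_{j+1}\}_{j=0}^{n-3},\beta)$, $Q_{n-1}(z)=Q_{n-1}(z;\{\alpha_{j+1}\}_{j=0}^{n-3},\beta)$. Then \[ P_n=\tfrac12(z-\bar\alpha_0+1-\alpha_0z)P_{n-1}+\tfrac12(z-\bar\alpha_0-1+\alpha_0z)Q_{n-1}, \] \[ Q_n=\tfrac12(z+\bar\alpha_0+1+\alpha_0z)Q_{n-1}+\tfrac12(z+\bar\alpha_0-1-\alpha_0z)P_{n-1}. \]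
   Context: For Verblunsky coefficients $\alpha_0,\alpha_1,\dots\in\mathbb{D}$ the monic orthogonal polynomials on the unit circle satisfy $\Phi_0=1$, $\Phi_{k+1}(z)=z\Phi_k(z)-\bar\alpha_k\Phi_k^*(z)$ with $\Phi_k^*(z)=z^k\overline{\Phi_k(1/\bar z)}$; the second kind polynomials $\Psi_k$ satisfy the same recursion with each $\alpha_j$ replaced by $-\alpha_j$. For $m\ge1$ and $\beta\in\partial\mathbb{D}$, $P_m(z;\{\alpha_j\}_{j=0}^{m-2},\beta)=z\Phi_{m-1}(z)-\bar\beta\Phi_{m-1}^*(z)$ and $Q_m(z;\{\alpha_j\}_{j=0}^{m-2},\beta)=z\Psi_{m-1}(z)+\bar\beta\Psi_{m-1}^*(z)$, with $\Phi_{m-1},\Psi_{m-1}$ built from $\alpha_0,\dots,\alpha_{m-2}$. *)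

From HB Require Import structures.
From mathcomp Require Import all_boot all_order all_algebra.
Set Implicit Arguments. Unset Strict Implicit. Unset Printing Implicit Defensive.
Import Order.TTheory GRing.Theory Num.Theory.
Local Open Scope ring_scope.

(* C : numClosedFieldType (complex-like field with conjugation x^* and norm);
   the complex numbers (e.g. R[i] for R real closed, algC) are instances. *)

(* reversed polynomial of degree-index k:  p^*(z) = z^k conj(p(1/conj z)) *)
Definition rstar (C : numClosedFieldType) (k : nat) (p : {poly C}) : {poly C} :=
  \poly_(i < k.+1) (p`_(k - i))^*.

(* monic OPUC Phi_k built from alpha_0, ..., alpha_{k-1} *)
Fixpoint Phi (C : numClosedFieldType) (a : nat -> C) (k : nat) : {poly C} :=
  match k with
  | 0 => 1
  | k'.+1 => 'X * Phi a k' - ((a k')^*) *: rstar k' (Phi a k')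
  end.

Definition Psi (C : numClosedFieldType) (a : nat -> C) (k : nat) : {poly C} :=
  Phi (fun j => - a j) k.

(* P_m(z; {alpha_j}_{j=0}^{m-2}, beta) and Q_m(z; ...), m >= 1 *)
Definition Ppar (C : numClosedFieldType) (m : nat) (a : nat -> C) (b : C) : {poly C} :=
  'X * Phi a m.-1 - (b^*) *: rstar m.-1 (Phi a m.-1).

Definition Qpar (C : numClosedFieldType) (m : nat) (a : nat -> C) (b : C) : {poly C} :=
  'X * Psi a m.-1 + (b^*) *: rstar m.-1 (Psi a m.-1).

From HB Require Import structures.
From mathcomp Require Import all_boot all_order all_algebra.
From mathcomp Require Import ring.
Import Order.TTheory GRing.Theory Num.Theory.
Local Open Scope ring_scope.

(* The Szego recursion acts on pairs (Phi_k, Phi_k^* ) by the step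
   (u, v) |-> (z u - conj(a) v, v - a z u), which is linear over C[z].
   Phi_k and the pair (Psi_k, -Psi_k^* ) are the iterates of this step starting
   from (1, 1) and (1, -1), and P_n, Q_n are the first components of one more
   step with parameter beta.  Peeling off the first step, with parameter
   alpha_0, sends (1, 1) and (1, -1) to C[z]-combinations of (1, 1) and
   (1, -1) with the coefficients of the theorem; linearity of the remaining
   steps transports these combinations to P_n and Q_n. *)

Section SzegoTransfer.
Variable C : numClosedFieldType.
Implicit Types (a : nat -> C) (c : C) (p u v x y : {poly C}).
Local Notation polypair := ({poly C} * {poly C})%type.
Implicit Types w : polypair.

Definition szego_step c w : polypair :=
  ('X * w.1 - c^* *: w.2, w.2 - c *: ('X * w.1)).

Fixpoint szego_iter a k w : polypair :=
  if k is k'.+1 then szego_step (a k') (szego_iter a k' w) else w.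

Definition pair_comb x y w w' : polypair :=
  (x * w.1 + y * w'.1, x * w.2 + y * w'.2).

Lemma szego_step_comb c x y w w' :
  szego_step c (pair_comb x y w w') =
  pair_comb x y (szego_step c w) (szego_step c w').
Proof. by congr (_, _); rewrite /= -!mul_polyC; ring. Qed.

Lemma szego_iter_comb a k x y w w' :
  szego_iter a k (pair_comb x y w w') =
  pair_comb x y (szego_iter a k w) (szego_iter a k w').
Proof. by elim: k => [|k IHk] //=; rewrite IHk szego_step_comb. Qed.

Lemma szego_iterSr a k w :
  szego_iter a k.+1 w = szego_iter (fun j => a j.+1) k (szego_step (a 0%N) w).
Proof. by elim: k => [|k IHk] //; apply: (congr1 (szego_step (a k.+1))). Qed.

Lemma szego_iter_negr a k u v :
  let r := szego_iter (fun j => - a j) k (u, v) in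
  szego_iter a k (u, - v) = (r.1, - r.2).
Proof.
elim: k => [|k IHk] //=; rewrite IHk /szego_step /=.
by congr (_, _); rewrite ?rmorphN -!mul_polyC ?polyCN; ring.
Qed.

Lemma size_Phi a k : (size (Phi a k) <= k.+1)%N.
Proof.
elim: k => [|k IHk] /=; first by rewrite size_poly1.
rewrite (leq_trans (size_polyD _ _)) // geq_max; apply/andP; split.
  by rewrite mulrC (leq_trans (size_polyMleq _ _)) // size_polyX addn2.
rewrite size_polyN (leq_trans (size_scale_leq _ _)) //.
exact: leq_trans (size_poly _ _) _.
Qed.

Lemma rstar0_1 : rstar 0 (1 : {poly C}) = 1.
Proof.
by apply/polyP => -[|i]; rewrite /rstar coef_poly coefC /= ?conjC1 ?coefC.
Qed.

Lemma szego_step_rstar c k p : (size p <= k.+1)%N ->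
  rstar k.+1 ('X * p - c^* *: rstar k p) = rstar k p - c *: ('X * p).
Proof.
move=> size_p; apply/polyP => -[|i]; rewrite /rstar !coefE.
  by rewrite subn0 /= ltnn !mulr0 !subr0 subn0.
rewrite subSS /= ltnS; case: (ltngtP i k) => [lt_ik | lt_ki | ->].
- have -> : (k - i)%N == 0%N = false by rewrite subn_eq0 leqNgt lt_ik.
  rewrite !ltnS leq_subr lt_ik (ltnW lt_ik) subKn ?(ltnW lt_ik) //.
  by rewrite rmorphB rmorphM /= !conjCK subnS.
- rewrite !ltnS [(i <= k)%N]leqNgt lt_ki [(i < k)%N]ltnNge (ltnW lt_ki) /=.
  by rewrite nth_default ?mulr0 ?subr0 // (leq_trans size_p).
- by rewrite subnn ltnn ltnSn /= !sub0r subn0 rmorphN rmorphM /= !conjCK.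
Qed.

Lemma szego_iter_Phi a k : szego_iter a k (1, 1) = (Phi a k, rstar k (Phi a k)).
Proof.
elim: k => [|k IHk] /=; first by rewrite rstar0_1.
by rewrite IHk /= szego_step_rstar ?size_Phi.
Qed.

Lemma szego_iter_Psi a k :
  szego_iter a k (1, -1) = (Psi a k, - rstar k (Psi a k)).
Proof. by rewrite szego_iter_negr szego_iter_Phi. Qed.

Lemma Ppar_szego m a b :
  Ppar m a b = (szego_step b (szego_iter a m.-1 (1, 1))).1.
Proof. by rewrite szego_iter_Phi. Qed.

Lemma Qpar_szego m a b :
  Qpar m a b = (szego_step b (szego_iter a m.-1 (1, -1))).1.
Proof. by rewrite szego_iter_Psi /= scalerN opprK. Qed.

Local Notation half := ((2^-1)%:P : {poly C}).

Lemma pair_comb_half x y :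
  pair_comb (half * (x + y)) (half * (x - y)) (1, 1) (1, -1) = (x, y).
Proof.
have half_twice : half + half = 1 by rewrite -polyCD -[2^-1]mul1r -splitr.
by congr (_, _); rewrite /= -[RHS]mul1r -[in RHS]half_twice; ring.
Qed.

Lemma szego_step_11 c :
  szego_step c (1, 1) =
  pair_comb (half * ('X - (c^*)%:P + 1 - c *: 'X))
            (half * ('X - (c^*)%:P - 1 + c *: 'X)) (1, 1) (1, -1).
Proof.
rewrite -[LHS]pair_comb_half.
by congr (pair_comb (_ * _) (_ * _)); rewrite /= -!mul_polyC; ring.
Qed.

Lemma szego_step_1N1 c :
  szego_step c (1, -1) =
  pair_comb (half * ('X + (c^*)%:P - 1 - c *: 'X))
            (half * ('X + (c^*)%:P + 1 + c *: 'X)) (1, 1) (1, -1).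
Proof.
rewrite -[LHS]pair_comb_half.
by congr (pair_comb (_ * _) (_ * _)); rewrite /= -!mul_polyC; ring.
Qed.

End SzegoTransfer.

Theorem theorem4p3 (C : numClosedFieldType) (n : nat) (alpha : nat -> C) (beta : C) :
  (2 <= n)%N ->
  `|beta| = 1 ->
  (forall j : nat, (j <= n - 2)%N -> `|alpha j| < 1) ->
  let a0 := alpha 0%N in
  let alpha' := fun j : nat => alpha j.+1 in
  Ppar n alpha beta =
    (2^-1)%:P * ('X - (a0^*)%:P + 1 - a0 *: 'X) * Ppar n.-1 alpha' beta
  + (2^-1)%:P * ('X - (a0^*)%:P - 1 + a0 *: 'X) * Qpar n.-1 alpha' beta
  /\
  Qpar n alpha beta =
    (2^-1)%:P * ('X + (a0^*)%:P + 1 + a0 *: 'X) * Qpar n.-1 alpha' beta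
  + (2^-1)%:P * ('X + (a0^*)%:P - 1 - a0 *: 'X) * Ppar n.-1 alpha' beta.
Proof.
case: n => [|[|m]] // _ _ _ /=.
rewrite !Ppar_szego !Qpar_szego !szego_iterSr szego_step_11 szego_step_1N1.
rewrite !szego_iter_comb !szego_step_comb.
by split; last rewrite [RHS]addrC.
Qed.
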